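(* Let $S=\mathbb{R}/{\sim_F^*}$ and let $f:\mathbb{R}\to S$ be $f(x)=[x]_{\sim_F^*}$. Then for every $T_3$-anonymous predictor $P:{}^{\mathbb{R}}S\to{}^{\mathbb{R}}S$, the function $P(f)$ is constant, i.e. $P(f)(w)=P(f)(z)$ for all $w,z\in\mathbb{R}$.
   Context: Let $h(x)=0$ for $x\le 0$ and $h(x)=e^{-1/x}$ for $x>0$, and $s(x)=\frac{h(x)}{h(x)+h(1-x)}$ on $[0,1]$. For $A=(p_1,q_1)$, $B=(p_2,q_2)$ with $p_1<p_2$, $q_1<q_2$, let $s_{AB}:[p_1,p_2]\to[q_1,q_2]$, $s_{AB}(x)=(q_2-q_1)\,s\!\left(\frac{x-p_1}{p_2-p_1}\right)+q_1$. Let $F$ be the set of all such $s_{AB}$ with $A,B$ having rational coordinates. Write $x\sim_F y$ if some $g\in F$ has $g(x)=y$ or $g^{-1}(x)=y$, and let $\sim_F^*$ be the reflexive-transitive closure of $\sim_F$ (an equivalence relation on $\mathbb{R}$). ${}^{\mathbb{R}}S$ denotes all functions $\mathbb{R}\to S$. A predictor is $P:{}^{\mathbb{R}}S\to{}^{\mathbb{R}}S$ with $P(f)(x)=P(g)(x)$ whenever $f\upharpoonright(-\infty,x)=g\upharpoonright(-\infty,x)$. $P$ is $T_3$-anonymous if $P(f\circ t)=P(f)\circ t$ for every $f$ and every $t\in T_3$, where $T_3$ is the set of infinitely differentiable strictly increasing bijections $\mathbb{R}\to\mathbb{R}$. *)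

From Stdlib Require Import Reals QArith Relations.
Open Scope R_scope.

Definition h (x : R) : R := if Rle_dec x 0 then 0 else exp (- / x).

Definition s (x : R) : R := h x / (h x + h (1 - x)).

(* s_AB with A = (p1,q1), B = (p2,q2), as a formula on reals;
   its domain [p1,p2] is imposed separately in simF. *)
Definition sAB (p1 q1 p2 q2 : R) (x : R) : R :=
  (q2 - q1) * s ((x - p1) / (p2 - p1)) + q1.

(* g = s_AB in F (rational endpoints, p1<p2, q1<q2), g : [p1,p2] -> [q1,q2]. *)
Definition inF_graph (x y : R) : Prop :=
  exists p1 q1 p2 q2 : Q,
    Q2R p1 < Q2R p2 /\ Q2R q1 < Q2R q2 /\
    Q2R p1 <= x <= Q2R p2 /\ sAB (Q2R p1) (Q2R q1) (Q2R p2) (Q2R q2) x = y.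

(* x ~F y iff g(x) = y or g^{-1}(x) = y for some g in F *)
Definition simF (x y : R) : Prop := inF_graph x y \/ inF_graph y x.

Definition simF_star : R -> R -> Prop := clos_refl_trans R simF.

Definition S : Type := { A : R -> Prop | exists x, A = simF_star x }.

Definition fcls (x : R) : S := exist _ (simF_star x) (ex_intro _ x eq_refl).

Definition smooth (t : R -> R) : Prop :=
  exists d : nat -> R -> R, d O = t /\
    forall n x, derivable_pt_lim (d n) x (d (Datatypes.S n) x).

Definition T3 (t : R -> R) : Prop :=
  smooth t /\ (forall x y, x < y -> t x < t y) /\
  (forall x y, t x = t y -> x = y) /\ (forall y, exists x, t x = y).

Definition is_predictor {X : Type} (P : (R -> X) -> (R -> X)) : Prop :=
  forall f g x, (forall y, y < x -> f y = g y) -> P f x = P g x.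

Definition T3_anonymous {X : Type} (P : (R -> X) -> (R -> X)) : Prop :=
  forall f t, T3 t -> P (fun x => f (t x)) = (fun x => P f (t x)).

From Stdlib Require Import Reals QArith Qreals Lra Lia List ZArith Relations.
From Stdlib Require Import FunctionalExtensionality ClassicalEpsilon PropExtensionality ProofIrrelevance.
Open Scope R_scope.

(* We build a smooth increasing bijection v = [reparam b] of R with v 0 = b
   such that every y < 0 is ~F-related to v y; then [fcls] and [fcls o v] agree on (-oo, 0), so
   P fcls b = P (fcls o v) 0 = P fcls 0 by anonymity and the predictor property.
   Below 0, v is glued from copies of s_AB joining the rational points
   (grid i, level i), where grid i increases to 0 and level i increases to b so fast
   that every derivative of v tends to 0 at 0 (s is flat at 0 and 1, so the gluing
   is smooth); above 0, v y = b + y h(y), which is flat at 0 and unbounded. *)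

Lemma derivable_pt_lim_glue (g g1 g2 : R -> R) (p y q l : R) :
  p < y -> y < q ->
  (forall x, p <= x <= y -> g x = g1 x) ->
  (forall x, y <= x <= q -> g x = g2 x) ->
  derivable_pt_lim g1 y l -> derivable_pt_lim g2 y l ->
  derivable_pt_lim g y l.
Proof.
  intros Hp Hq E1 E2 D1 D2 eps Heps.
  destruct (D1 eps Heps) as [[d1 Hd1] HD1]; destruct (D2 eps Heps) as [[d2 Hd2] HD2].
  simpl in HD1, HD2.
  set (d := Rmin (Rmin d1 d2) (Rmin (y - p) (q - y))).
  assert (Hd : 0 < d) by (unfold d; repeat apply Rmin_glb_lt; lra).
  exists (mkposreal d Hd); intros t Ht0 Ht; simpl in Ht.
  pose proof (Rmin_l (Rmin d1 d2) (Rmin (y - p) (q - y))) as M1.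
  pose proof (Rmin_r (Rmin d1 d2) (Rmin (y - p) (q - y))) as M2.
  pose proof (Rmin_l d1 d2); pose proof (Rmin_r d1 d2).
  pose proof (Rmin_l (y - p) (q - y)); pose proof (Rmin_r (y - p) (q - y)).
  fold d in M1, M2.
  destruct (Rlt_dec t 0) as [Hneg | Hpos].
  - rewrite Rabs_left in Ht by lra.
    rewrite (E1 (y + t)), (E1 y) by lra. apply HD1; [assumption | rewrite Rabs_left; lra].
  - rewrite Rabs_right in Ht by lra.
    rewrite (E2 (y + t)), (E2 y) by lra. apply HD2; [assumption | rewrite Rabs_right; lra].
Qed.

Lemma derivable_pt_lim_local (g g1 : R -> R) (p y q l : R) :
  p < y -> y < q -> (forall x, p <= x <= q -> g x = g1 x) ->
  derivable_pt_lim g1 y l -> derivable_pt_lim g y l.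
Proof.
  intros Hp Hq E D.
  apply (derivable_pt_lim_glue g g1 g1 p y q l); auto; intros x Hx; apply E; lra.
Qed.

Lemma derivable_pt_lim_eq0_of_stationary (g : R -> R) (y l : R) :
  (forall e, 0 < e -> exists t, t <> 0 /\ Rabs t < e /\ g (y + t) = g y) ->
  derivable_pt_lim g y l -> l = 0.
Proof.
  intros Hst D. destruct (Req_dec l 0) as [|Hl]; [assumption|].
  assert (Hl2 : 0 < Rabs l / 2) by (apply Rabs_pos_lt in Hl; lra).
  destruct (D _ Hl2) as [[e He] Hd]; simpl in Hd.
  destruct (Hst e He) as [t [Ht0 [Hte Hgt]]].
  specialize (Hd t Ht0 Hte). rewrite Hgt in Hd.
  replace ((g y - g y) / t - l) with (- l) in Hd by (field; assumption).
  rewrite Rabs_Ropp in Hd. lra.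
Qed.

Lemma derivable_pt_lim_0_of_quadratic_bound (g : R -> R) (y d K : R) :
  0 < d -> (forall x, Rabs (x - y) < d -> Rabs (g x - g y) <= K * (x - y)²) ->
  derivable_pt_lim g y 0.
Proof.
  intros Hd Hb eps Heps.
  set (K1 := Rabs K + 1).
  assert (HK1 : 0 < K1) by (unfold K1; pose proof (Rabs_pos K); lra).
  assert (Hdelta : 0 < Rmin d (eps / K1)) by (apply Rmin_glb_lt; [lra | apply Rdiv_lt_0_compat; lra]).
  exists (mkposreal _ Hdelta); intros t Ht0 Ht; simpl in Ht.
  pose proof (Rmin_l d (eps / K1)); pose proof (Rmin_r d (eps / K1)).
  specialize (Hb (y + t)). replace (y + t - y) with t in Hb by ring.
  specialize (Hb ltac:(lra)). rewrite Rsqr_abs in Hb; unfold Rsqr in Hb.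
  assert (Ha : 0 < Rabs t) by (apply Rabs_pos_lt; assumption).
  assert (HK1t : K1 * Rabs t < eps).
  { apply (Rmult_lt_reg_r (/ K1)); [apply Rinv_0_lt_compat; lra|].
    replace (K1 * Rabs t * / K1) with (Rabs t) by (field; lra). unfold Rdiv in H0; lra. }
  assert (HKK1 : K <= K1) by (unfold K1; pose proof (Rle_abs K); lra).
  rewrite Rminus_0_r. unfold Rdiv. rewrite Rabs_mult, Rabs_inv.
  apply (Rmult_lt_reg_r (Rabs t)); [assumption|].
  rewrite Rmult_assoc, Rinv_l by lra. nra.
Qed.

Fixpoint Cn (n : nat) (f : R -> R) : Prop :=
  match n with
  | O => True
  | Datatypes.S m => exists f', (forall x, derivable_pt_lim f x (f' x)) /\ Cn m f'
  end.

Lemma Cn_pred n : forall f, Cn (Datatypes.S n) f -> Cn n f.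
Proof.
  induction n as [|n IH]; intros f [f' [Df Cf']]; simpl; [trivial|].
  exists f'; split; [assumption | apply IH; assumption].
Qed.

Lemma Cn_const n : forall c, Cn n (fun _ => c).
Proof.
  induction n as [|n IH]; intro c; simpl; [trivial|].
  exists (fun _ => 0); split; [intro; apply derivable_pt_lim_const | apply IH].
Qed.

Lemma Cn_plus n : forall f g, Cn n f -> Cn n g -> Cn n (fun x => f x + g x).
Proof.
  induction n as [|n IH]; intros f g Cf Cg; simpl; [trivial|].
  destruct Cf as [f' [Df Cf']], Cg as [g' [Dg Cg']].
  exists (fun x => f' x + g' x); split; [|apply IH; assumption].
  intro x; apply (derivable_pt_lim_plus f g); auto.
Qed.

Lemma Cn_mult n : forall f g, Cn n f -> Cn n g -> Cn n (fun x => f x * g x).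
Proof.
  induction n as [|n IH]; intros f g Cf Cg; simpl; [trivial|].
  pose proof (Cn_pred _ _ Cf) as Cf0; pose proof (Cn_pred _ _ Cg) as Cg0.
  destruct Cf as [f' [Df Cf']], Cg as [g' [Dg Cg']].
  exists (fun x => f' x * g x + f x * g' x); split.
  - intro x; apply (derivable_pt_lim_mult f g); auto.
  - apply Cn_plus; apply IH; assumption.
Qed.

Lemma Cn_inv n : forall g, (forall x, g x <> 0) -> Cn n g -> Cn n (fun x => / g x).
Proof.
  induction n as [|n IH]; intros g Hg Cg; simpl; [trivial|].
  pose proof (Cn_pred _ _ Cg) as Cg0.
  destruct Cg as [g' [Dg Cg']].
  exists (fun x => -1 * g' x * (/ g x * / g x)); split.
  - intro x.
    pose proof (derivable_pt_lim_div (fun _ => 1) g x 0 (g' x)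
                  (derivable_pt_lim_const 1 x) (Dg x) (Hg x)) as D.
    replace (fun x => / g x) with (div_fct (fun _ => 1) g)
      by (apply functional_extensionality; intro; unfold div_fct, Rdiv; ring).
    replace (-1 * g' x * (/ g x * / g x)) with ((0 * g x - g' x * 1) / (g x)²)
      by (unfold Rsqr; field; apply Hg).
    exact D.
  - apply Cn_mult; [apply (Cn_mult n (fun _ => -1)); [apply Cn_const | assumption] |].
    apply Cn_mult; apply IH; assumption.
Qed.

Lemma Cn_reflect n : forall f, Cn n f -> Cn n (fun x => f (1 - x)).
Proof.
  induction n as [|n IH]; intros f Cf; simpl; [trivial|].
  destruct Cf as [f' [Df Cf']].
  exists (fun x => -1 * f' (1 - x)); split.
  - intro x.
    assert (Dl : derivable_pt_lim (fun x => 1 - x) x (-1)).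
    { replace (-1) with (0 - 1) by ring.
      apply (derivable_pt_lim_minus (fun _ => 1) id);
        [apply derivable_pt_lim_const | apply derivable_pt_lim_id]. }
    pose proof (derivable_pt_lim_comp _ f x _ _ Dl (Df (1 - x))) as D.
    replace (-1 * f' (1 - x)) with (f' (1 - x) * -1) by ring. exact D.
  - apply (Cn_mult n (fun _ => -1)); [apply Cn_const | apply IH; assumption].
Qed.

Lemma Cn_of_derivative_seq (d : nat -> R -> R) :
  (forall k x, derivable_pt_lim (d k) x (d (Datatypes.S k) x)) ->
  forall n k, Cn n (d k).
Proof.
  intros D n; induction n as [|n IH]; intro k; simpl; [trivial|].
  exists (d (Datatypes.S k)); split; [apply D | apply IH].
Qed.

Lemma smooth_of_Cn (f : R -> R) : (forall n, Cn n f) -> smooth f.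
Proof.
  intro Cf.
  set (der g := epsilon (inhabits (fun _ => 0))
                  (fun g' => forall x, derivable_pt_lim g x (g' x))).
  assert (Hder : forall g, (forall n, Cn n g) ->
            (forall x, derivable_pt_lim g x (der g x)) /\ (forall n, Cn n (der g))).
  { intros g Cg.
    destruct (Cg 1%nat) as [g1 [Dg1 _]].
    assert (Dder : forall x, derivable_pt_lim g x (der g x))
      by exact (epsilon_spec _ (fun g' => forall x, derivable_pt_lim g x (g' x))
                  (ex_intro _ g1 Dg1)).
    split; [assumption|]. intro n.
    destruct (Cg (Datatypes.S n)) as [g' [Dg' Cg']].
    replace (der g) with g'; [assumption|].
    apply functional_extensionality; intro x; eapply uniqueness_limite; eauto. }
  assert (Citer : forall n m, Cn m (Nat.iter n der f))
    by (induction n; simpl; [assumption | apply Hder; assumption]).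
  exists (fun n => Nat.iter n der f); split; [reflexivity|].
  intros n x; apply Hder, Citer.
Qed.

(** * Flatness of h at 0 *)

Fixpoint peval (p : list R) (t : R) : R :=
  match p with nil => 0 | a :: q => a + t * peval q t end.

Fixpoint padd (p q : list R) : list R :=
  match p, q with
  | nil, _ => q
  | _, nil => p
  | a :: p', b :: q' => (a + b) :: padd p' q'
  end.

Fixpoint pderiv (p : list R) : list R :=
  match p with nil => nil | a :: q => padd q (0 :: pderiv q) end.

Fixpoint pnorm1 (p : list R) : R :=
  match p with nil => 0 | a :: q => Rabs a + pnorm1 q end.

(* For x > 0 the k-th derivative of h is [flat_poly k (1/x) * exp (-1/x)], since
   (p(1/x) e^{-1/x})' = (1/x)^2 (p - p')(1/x) e^{-1/x}. *)
Fixpoint flat_poly (k : nat) : list R :=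
  match k with
  | O => 1 :: nil
  | Datatypes.S k' => 0 :: 0 :: padd (flat_poly k') (map Ropp (pderiv (flat_poly k')))
  end.

Lemma peval_padd p : forall q t, peval (padd p q) t = peval p t + peval q t.
Proof. induction p as [|a p IH]; intros [|b q] t; simpl; try ring. rewrite IH; ring. Qed.

Lemma peval_opp p t : peval (map Ropp p) t = - peval p t.
Proof. induction p as [|a p IH]; simpl; [ring | rewrite IH; ring]. Qed.

Lemma peval_flat_poly_S k t :
  peval (flat_poly (Datatypes.S k)) t =
  t * t * (peval (flat_poly k) t - peval (pderiv (flat_poly k)) t).
Proof. simpl. rewrite peval_padd, peval_opp. ring. Qed.

Lemma derivable_pt_lim_peval p t : derivable_pt_lim (peval p) t (peval (pderiv p) t).
Proof.
  induction p as [|a p IH]; simpl; [apply derivable_pt_lim_const|].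
  rewrite peval_padd; simpl.
  replace (peval p t + (0 + t * peval (pderiv p) t))
    with (0 + (1 * peval p t + t * peval (pderiv p) t)) by ring.
  apply (derivable_pt_lim_plus (fun _ => a) (fun t => t * peval p t));
    [apply derivable_pt_lim_const|].
  apply (derivable_pt_lim_mult id (peval p)); [apply derivable_pt_lim_id | exact IH].
Qed.

Lemma pnorm1_ge0 p : 0 <= pnorm1 p.
Proof. induction p as [|a p IH]; simpl; [lra | pose proof (Rabs_pos a); lra]. Qed.

Lemma peval_bound p t : 1 <= t -> Rabs (peval p t) <= pnorm1 p * t ^ length p.
Proof.
  intro Ht. induction p as [|a p IH]; simpl; [rewrite Rabs_R0; lra|].
  eapply Rle_trans; [apply Rabs_triang|].
  rewrite Rabs_mult, (Rabs_right t) by lra.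
  assert (1 <= t ^ length p) by (apply pow_R1_Rle; lra).
  pose proof (Rabs_pos a); pose proof (pnorm1_ge0 p).
  assert (t * Rabs (peval p t) <= t * (pnorm1 p * t ^ length p))
    by (apply Rmult_le_compat_l; lra).
  assert (1 <= t * t ^ length p) by nra.
  nra.
Qed.

Lemma pow_le_exp n T :
  0 < T -> T ^ Datatypes.S n <= INR (Datatypes.S n) ^ Datatypes.S n * exp T.
Proof.
  intro HT. set (m := INR (Datatypes.S n)).
  assert (Hm : 0 < m) by (unfold m; apply lt_0_INR; lia).
  assert (Eexp : forall k, exp (INR k * (T / m)) = exp (T / m) ^ k).
  { induction k as [|k IH]; [simpl; rewrite Rmult_0_l, exp_0; reflexivity|].
    rewrite S_INR, Rmult_plus_distr_r, exp_plus, IH, Rmult_1_l; simpl; ring. }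
  replace T with (INR (Datatypes.S n) * (T / m)) at 2 by (unfold m in *; field; lra).
  rewrite Eexp.
  replace (T ^ Datatypes.S n) with (m ^ Datatypes.S n * (T / m) ^ Datatypes.S n)
    by (rewrite <- Rpow_mult_distr; f_equal; field; lra).
  apply Rmult_le_compat_l; [apply pow_le; lra|].
  apply pow_incr; split; [apply Rlt_le, Rdiv_lt_0_compat; lra|].
  pose proof (exp_ineq1_le (T / m)); lra.
Qed.

Definition flat_branch (k : nat) (x : R) : R := peval (flat_poly k) (/ x) * exp (- / x).

Definition h_deriv (k : nat) (x : R) : R := if Rle_dec x 0 then 0 else flat_branch k x.

Lemma h_deriv_0 : h_deriv 0 = h.
Proof.
  apply functional_extensionality; intro x. unfold h_deriv, flat_branch, h; simpl.
  destruct (Rle_dec x 0); [reflexivity | ring].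
Qed.

Lemma derivable_pt_lim_Rinv x : x <> 0 -> derivable_pt_lim (fun y => / y) x (- / (x * x)).
Proof.
  intro Hx.
  pose proof (derivable_pt_lim_div (fun _ => 1) id x 0 1
                (derivable_pt_lim_const 1 x) (derivable_pt_lim_id x) Hx) as D.
  replace (fun y => / y) with (div_fct (fun _ : R => 1) id)
    by (apply functional_extensionality; intro; unfold div_fct, id, Rdiv; ring).
  replace (- / (x * x)) with ((0 * id x - 1 * 1) / (id x)²) by (unfold id, Rsqr; field; exact Hx).
  exact D.
Qed.

Lemma derivable_pt_lim_flat_branch k x :
  x <> 0 -> derivable_pt_lim (flat_branch k) x (flat_branch (Datatypes.S k) x).
Proof.
  intro Hx. unfold flat_branch.
  assert (D1 : derivable_pt_lim (fun y => peval (flat_poly k) (/ y)) x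
                 (peval (pderiv (flat_poly k)) (/ x) * (- / (x * x)))).
  { apply (derivable_pt_lim_comp (fun y => / y) (peval (flat_poly k)));
      [apply derivable_pt_lim_Rinv; exact Hx | apply derivable_pt_lim_peval]. }
  assert (D2 : derivable_pt_lim (fun y => exp (- / y)) x (exp (- / x) * / (x * x))).
  { apply (derivable_pt_lim_comp (fun y => - / y) exp); [|apply derivable_pt_lim_exp].
    replace (/ (x * x)) with (- (- / (x * x))) by ring.
    apply (derivable_pt_lim_opp (fun y => / y)); apply derivable_pt_lim_Rinv; exact Hx. }
  pose proof (derivable_pt_lim_mult _ _ _ _ _ D1 D2) as D. unfold mult_fct in D.
  rewrite peval_flat_poly_S.
  match goal with |- derivable_pt_lim _ _ ?l => replace l with
    (peval (pderiv (flat_poly k)) (/ x) * - / (x * x) * exp (- / x) +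
     peval (flat_poly k) (/ x) * (exp (- / x) * / (x * x))) by (field; exact Hx) end.
  exact D.
Qed.

Lemma h_deriv_quadratic_bound k :
  exists K, 0 <= K /\ forall x, 0 < x <= 1 -> Rabs (h_deriv k x) <= K * x².
Proof.
  set (p := flat_poly k). set (m := Datatypes.S (Datatypes.S (length p))).
  exists (pnorm1 p * INR m ^ m).
  split; [apply Rmult_le_pos; [apply pnorm1_ge0 | apply pow_le, pos_INR]|].
  intros x Hx. unfold h_deriv, flat_branch. destruct (Rle_dec x 0) as [|_]; [lra|]. fold p.
  set (T := / x).
  assert (HT : 1 <= T) by (unfold T; rewrite <- Rinv_1; apply Rinv_le_contravar; lra).
  assert (Ex : x = / T) by (unfold T; field; lra).
  pose proof (peval_bound p T HT) as Hp.
  pose proof (pow_le_exp (Datatypes.S (length p)) T ltac:(lra)) as He. fold m in He.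
  pose proof (exp_pos T) as HeT. pose proof (pnorm1_ge0 p) as Hn.
  assert (HTl : 0 < T ^ length p) by (apply pow_lt; lra).
  rewrite Rabs_mult, (Rabs_right (exp (- T))) by (apply Rle_ge, Rlt_le, exp_pos).
  rewrite exp_Ropp, Ex. unfold Rsqr.
  replace (T ^ m) with (T ^ length p * (T * T)) in He by (unfold m; simpl; ring).
  apply (Rmult_le_reg_r (exp T * (T * T))); [apply Rmult_lt_0_compat; nra|].
  replace (Rabs (peval p T) * / exp T * (exp T * (T * T))) with (Rabs (peval p T) * (T * T))
    by (field; lra).
  replace (pnorm1 p * INR m ^ m * (/ T * / T) * (exp T * (T * T)))
    with (pnorm1 p * (INR m ^ m * exp T)) by (field; lra).
  apply Rle_trans with (pnorm1 p * T ^ length p * (T * T)); [apply Rmult_le_compat_r; nra|].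
  rewrite Rmult_assoc. apply Rmult_le_compat_l; assumption.
Qed.

Lemma derivable_pt_lim_h_deriv k x : derivable_pt_lim (h_deriv k) x (h_deriv (Datatypes.S k) x).
Proof.
  destruct (Rtotal_order x 0) as [Hneg | [Hzero | Hpos]].
  - apply (derivable_pt_lim_local _ (fun _ => 0) (x - 1) x (x / 2)); try lra.
    + intros y Hy; unfold h_deriv; destruct (Rle_dec y 0); [reflexivity | lra].
    + unfold h_deriv; destruct (Rle_dec x 0); [apply derivable_pt_lim_const | lra].
  - subst x. unfold h_deriv at 2. destruct (Rle_dec 0 0) as [_|]; [|lra].
    destruct (h_deriv_quadratic_bound k) as [K [HK Hb]].
    apply (derivable_pt_lim_0_of_quadratic_bound _ 0 1 K); [lra|].
    intros x Hx. rewrite Rminus_0_r in *.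
    unfold h_deriv at 2. destruct (Rle_dec 0 0) as [_|]; [|lra]. rewrite Rminus_0_r.
    destruct (Rle_dec x 0) as [Hx0 | Hx0].
    + unfold h_deriv; destruct (Rle_dec x 0); [|lra].
      rewrite Rabs_R0; apply Rmult_le_pos; [assumption | apply Rle_0_sqr].
    + apply Hb. rewrite Rabs_right in Hx by lra. lra.
  - apply (derivable_pt_lim_local _ (flat_branch k) (x / 2) x (x + 1)); try lra.
    + intros y Hy; unfold h_deriv; destruct (Rle_dec y 0); [lra | reflexivity].
    + unfold h_deriv; destruct (Rle_dec x 0); [lra|].
      apply derivable_pt_lim_flat_branch; lra.
Qed.

Lemma h_Cn n : Cn n h.
Proof. rewrite <- h_deriv_0. apply Cn_of_derivative_seq, derivable_pt_lim_h_deriv. Qed.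

Lemma h_ge0 x : 0 <= h x.
Proof. unfold h; destruct (Rle_dec x 0); [lra | apply Rlt_le, exp_pos]. Qed.

Lemma h_gt0 x : 0 < x -> 0 < h x.
Proof. intro; unfold h; destruct (Rle_dec x 0); [lra | apply exp_pos]. Qed.

Lemma h_le0 x : x <= 0 -> h x = 0.
Proof. intro; unfold h; destruct (Rle_dec x 0); [reflexivity | lra]. Qed.

Lemma h_lt x y : 0 < x -> x < y -> h x < h y.
Proof.
  intros Hx Hxy. unfold h.
  destruct (Rle_dec x 0); [lra|]. destruct (Rle_dec y 0); [lra|].
  apply exp_increasing, Ropp_lt_contravar, Rinv_lt_contravar; nra.
Qed.

Lemma h_sum_gt0 x : 0 < h x + h (1 - x).
Proof.
  pose proof (h_ge0 x); pose proof (h_ge0 (1 - x)).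
  destruct (Rlt_dec 0 x); [pose proof (h_gt0 x r) | pose proof (h_gt0 (1 - x) ltac:(lra))]; lra.
Qed.

Lemma s_smooth : smooth s.
Proof.
  apply smooth_of_Cn; intro n.
  replace s with (fun x => h x * / (h x + h (1 - x)))
    by (apply functional_extensionality; intro; reflexivity).
  apply Cn_mult; [apply h_Cn|].
  apply Cn_inv; [intro x; pose proof (h_sum_gt0 x); lra|].
  apply Cn_plus; [apply h_Cn | apply (Cn_reflect n h), h_Cn].
Qed.

Definition s_deriv : nat -> R -> R :=
  proj1_sig (constructive_indefinite_description _ s_smooth).

Lemma s_deriv_0 : s_deriv O = s.
Proof. unfold s_deriv; destruct (constructive_indefinite_description _ _) as [d [D0 D]]; exact D0. Qed.

Lemma derivable_pt_lim_s_deriv k x :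
  derivable_pt_lim (s_deriv k) x (s_deriv (Datatypes.S k) x).
Proof. unfold s_deriv; destruct (constructive_indefinite_description _ _) as [d [D0 D]]; apply D. Qed.

Lemma s_le0 x : x <= 0 -> s x = 0.
Proof. intro; unfold s; rewrite (h_le0 x) by assumption; unfold Rdiv; ring. Qed.

Lemma s_ge1 x : 1 <= x -> s x = 1.
Proof.
  intro; unfold s; rewrite (h_le0 (1 - x)) by lra.
  pose proof (h_gt0 x ltac:(lra)); field; lra.
Qed.

Lemma s_range x : 0 <= s x <= 1.
Proof.
  unfold s. pose proof (h_sum_gt0 x); pose proof (h_ge0 x); pose proof (h_ge0 (1 - x)).
  split; [apply Rmult_le_pos; [lra | apply Rlt_le, Rinv_0_lt_compat; lra]|].
  apply (Rmult_le_reg_r (h x + h (1 - x))); [assumption|].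
  unfold Rdiv; rewrite Rmult_assoc, Rinv_l by lra; lra.
Qed.

Lemma s_lt x y : 0 <= x -> x < y -> y <= 1 -> s x < s y.
Proof.
  intros Hx Hxy Hy. unfold s.
  pose proof (h_sum_gt0 x); pose proof (h_sum_gt0 y).
  assert (Hhx : h x <= h y).
  { destruct (Rle_dec x 0); [rewrite h_le0 by assumption; apply h_ge0|].
    apply Rlt_le, h_lt; lra. }
  assert (Hhy : 0 < h y) by (apply h_gt0; lra).
  assert (Hh1 : h (1 - y) < h (1 - x)).
  { destruct (Rle_dec (1 - y) 0); [rewrite (h_le0 (1 - y)) by assumption; apply h_gt0; lra|].
    apply h_lt; lra. }
  pose proof (h_ge0 (1 - y)); pose proof (h_ge0 x).
  apply (Rmult_lt_reg_r ((h x + h (1 - x)) * (h y + h (1 - y)))); [nra|].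
  replace (h x / (h x + h (1 - x)) * ((h x + h (1 - x)) * (h y + h (1 - y))))
    with (h x * (h y + h (1 - y))) by (field; lra).
  replace (h y / (h y + h (1 - y)) * ((h x + h (1 - x)) * (h y + h (1 - y))))
    with (h y * (h x + h (1 - x))) by (field; lra).
  nra.
Qed.

Lemma s_deriv_le0 k : forall x, x <= 0 -> s_deriv k x = 0.
Proof.
  induction k as [|k IH]; intros x Hx; [rewrite s_deriv_0; apply s_le0; assumption|].
  apply (derivable_pt_lim_eq0_of_stationary (s_deriv k) x);
    [|apply derivable_pt_lim_s_deriv].
  intros e He; exists (- e / 2); repeat split; [lra | rewrite Rabs_left; lra|].
  rewrite !IH; lra.
Qed.

Lemma s_deriv_ge1 k : forall x, 1 <= x -> s_deriv (Datatypes.S k) x = 0.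
Proof.
  induction k as [|k IH]; intros x Hx.
  - apply (derivable_pt_lim_eq0_of_stationary (s_deriv 0) x); [|apply derivable_pt_lim_s_deriv].
    intros e He; exists (e / 2); repeat split; [lra | rewrite Rabs_right; lra|].
    rewrite s_deriv_0, !s_ge1; lra.
  - apply (derivable_pt_lim_eq0_of_stationary (s_deriv (Datatypes.S k)) x);
      [|apply derivable_pt_lim_s_deriv].
    intros e He; exists (e / 2); repeat split; [lra | rewrite Rabs_right; lra|].
    rewrite !IH; lra.
Qed.

Lemma s_deriv_bounded k : exists M, forall u, 0 <= u <= 1 -> Rabs (s_deriv k u) <= M.
Proof.
  destruct (continuity_ab_maj (fun u => Rabs (s_deriv k u)) 0 1) as [m [Hm _]]; [lra| |].
  - intros u _. apply (continuity_pt_comp (s_deriv k) Rabs); [|apply Rcontinuity_abs].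
    apply derivable_continuous_pt. exists (s_deriv (Datatypes.S k) u).
    apply derivable_pt_lim_s_deriv.
  - exists (Rabs (s_deriv k m)); exact Hm.
Qed.

(** * Grid and levels *)

Definition grid (i : Z) : R := if Z.leb 0 i then - / (IZR i + 1) else IZR i - 1.

Lemma grid_of_nonneg i : (0 <= i)%Z -> grid i = - / (IZR i + 1).
Proof. intro; unfold grid; destruct (Z.leb_spec 0 i); [reflexivity | lia]. Qed.

Lemma grid_of_nonpos i : (i <= 0)%Z -> grid i = IZR i - 1.
Proof.
  intro; unfold grid; destruct (Z.leb_spec 0 i); [|reflexivity].
  replace i with 0%Z by lia; simpl; field.
Qed.

Lemma grid_of_nat n : grid (Z.of_nat n) = - / (INR n + 1).
Proof. rewrite grid_of_nonneg, <- INR_IZR_INZ by lia; reflexivity. Qed.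

Lemma grid_lt_succ i : grid i < grid (i + 1).
Proof.
  destruct (Z.le_gt_cases 0 i) as [Hi|Hi].
  - rewrite !grid_of_nonneg, plus_IZR by lia. apply IZR_le in Hi.
    apply Ropp_lt_contravar, Rinv_lt_contravar; simpl; nra.
  - rewrite !grid_of_nonpos, plus_IZR by lia; simpl; lra.
Qed.

Lemma grid_lt0 i : grid i < 0.
Proof.
  destruct (Z.le_gt_cases 0 i) as [Hi|Hi].
  - rewrite grid_of_nonneg by lia. apply IZR_le in Hi.
    assert (0 < / (IZR i + 1)) by (apply Rinv_0_lt_compat; simpl in Hi; lra). lra.
  - rewrite grid_of_nonpos by lia. apply IZR_lt in Hi; simpl in Hi; lra.
Qed.

Lemma grid_le i j : (i <= j)%Z -> grid i <= grid j.
Proof.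
  intro Hij. replace j with (i + Z.of_nat (Z.to_nat (j - i)))%Z by lia.
  induction (Z.to_nat (j - i)) as [|n IH]; [rewrite Z.add_0_r; lra|].
  rewrite Nat2Z.inj_succ, <- Z.add_1_r, Z.add_assoc.
  pose proof (grid_lt_succ (i + Z.of_nat n)); lra.
Qed.

Lemma Q2R_inject_Z z : Q2R (inject_Z z) = IZR z.
Proof. unfold Q2R, inject_Z; simpl; field. Qed.

Lemma grid_rational i : exists q, grid i = Q2R q.
Proof.
  unfold grid. destruct (Z.leb_spec 0 i) as [Hi|Hi].
  - assert (Hq : IZR (i + 1) <> 0) by (apply not_0_IZR; lia).
    exists (- / inject_Z (i + 1))%Q.
    rewrite Q2R_opp, Q2R_inv, Q2R_inject_Z, plus_IZR; [reflexivity|].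
    intro E; apply Qeq_eqR in E; rewrite Q2R_inject_Z in E; unfold Q2R in E; simpl in E.
    apply Hq; lra.
  - exists (inject_Z (i - 1)); rewrite Q2R_inject_Z, minus_IZR; reflexivity.
Qed.

Definition grid_index (y : R) : Z :=
  if Rlt_dec y (-1) then up y else (up (- / y) - 2)%Z.

Lemma grid_index_spec y : y < 0 -> grid (grid_index y) <= y < grid (grid_index y + 1).
Proof.
  intro Hy. unfold grid_index. destruct (Rlt_dec y (-1)).
  - destruct (archimed y) as [H1 H2].
    assert (Hu : (up y <= -1)%Z)
      by (apply Z.lt_succ_r, lt_IZR; rewrite succ_IZR; simpl; lra).
    rewrite !grid_of_nonpos, plus_IZR by lia; simpl; lra.
  - set (t := - / y).
    assert (Ht : 1 <= t).
    { unfold t. replace (- / y) with (/ - y) by (field; lra).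
      rewrite <- Rinv_1; apply Rinv_le_contravar; lra. }
    destruct (archimed t) as [H1 H2].
    assert (Hu : (2 <= up t)%Z)
      by (apply Z.lt_succ_r, lt_IZR; rewrite succ_IZR; simpl; lra).
    rewrite !grid_of_nonneg, plus_IZR, minus_IZR by lia. simpl.
    replace y with (- / t) by (unfold t; field; lra).
    split; [apply Ropp_le_contravar, Rinv_le_contravar; lra|].
    apply Ropp_lt_contravar, Rinv_lt_contravar; nra.
Qed.

Lemma grid_index_unique i y : grid i <= y < grid (i + 1) -> grid_index y = i.
Proof.
  intro H. pose proof (grid_lt0 (i + 1)).
  destruct (grid_index_spec y ltac:(lra)) as [H1 H2].
  destruct (Z.lt_trichotomy (grid_index y) i) as [Hl | [He | Hg]]; [| exact He |].
  - pose proof (grid_le (grid_index y + 1) i ltac:(lia)); lra.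
  - pose proof (grid_le (i + 1) (grid_index y) ltac:(lia)); lra.
Qed.

Lemma grid_step_ge n : / (INR n + 2) ^ 2 <= grid (Z.of_nat n + 1) - grid (Z.of_nat n).
Proof.
  replace (Z.of_nat n + 1)%Z with (Z.of_nat (Datatypes.S n)) by lia.
  rewrite !grid_of_nat, S_INR. pose proof (pos_INR n).
  replace (- / (INR n + 1 + 1) - - / (INR n + 1)) with (/ ((INR n + 1) * (INR n + 2)))
    by (field; lra).
  apply Rinv_le_contravar; nra.
Qed.

Lemma sqr_ge_on_cell n y :
  grid (Z.of_nat n) <= y <= grid (Z.of_nat n + 1) -> / (INR n + 2) ^ 2 <= y ^ 2.
Proof.
  replace (Z.of_nat n + 1)%Z with (Z.of_nat (Datatypes.S n)) by lia.
  rewrite !grid_of_nat, S_INR. intro Hy. pose proof (pos_INR n).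
  replace (INR n + 1 + 1) with (INR n + 2) in Hy by ring.
  assert (0 < / (INR n + 2)) by (apply Rinv_0_lt_compat; lra).
  rewrite <- pow_inv. nra.
Qed.

Lemma Q2R_dense x y : x < y -> exists q : Q, x < Q2R q < y.
Proof.
  intro Hxy. destruct (archimed (/ (y - x))) as [N1 _].
  assert (Hinv : 0 < / (y - x)) by (apply Rinv_0_lt_compat; lra).
  set (n := up (/ (y - x))) in *. assert (Hn : 0 < IZR n) by lra.
  destruct (archimed (x * IZR n)) as [M1 M2]. set (m := up (x * IZR n)) in *.
  assert (Hn0 : ~ (inject_Z n == 0)%Q)
    by (intro E; apply Qeq_eqR in E; rewrite Q2R_inject_Z in E; unfold Q2R in E; simpl in E; lra).
  assert (Hwidth : 1 < (y - x) * IZR n).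
  { replace 1 with ((y - x) * / (y - x)) by (field; lra). apply Rmult_lt_compat_l; lra. }
  exists (inject_Z m / inject_Z n)%Q.
  rewrite Q2R_div, !Q2R_inject_Z by exact Hn0.
  split; apply (Rmult_lt_reg_r (IZR n)); try exact Hn;
    unfold Rdiv; rewrite Rmult_assoc, Rinv_l by lra; lra.
Qed.

Definition gap (n : nat) : R := / (INR n + 2) ^ (2 * n + 2).

Lemma gap_gt0 n : 0 < gap n.
Proof. apply Rinv_0_lt_compat, pow_lt; pose proof (pos_INR n); lra. Qed.

Lemma gap_succ_lt n : gap (Datatypes.S n) < gap n.
Proof.
  unfold gap. pose proof (pos_INR n). rewrite S_INR.
  apply Rinv_lt_contravar; [apply Rmult_lt_0_compat; apply pow_lt; lra|].
  apply Rlt_le_trans with ((INR n + 2) ^ (2 * Datatypes.S n + 2)).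
  - apply Rlt_pow; [lra | lia].
  - apply pow_incr; lra.
Qed.

Lemma gap_scaled_le n m :
  (m <= n)%nat -> gap n * (INR n + 2) ^ (2 * m) <= / (INR n + 2) ^ 2.
Proof.
  intro Hmn. unfold gap. set (N := INR n + 2).
  assert (HN : 1 <= N) by (unfold N; pose proof (pos_INR n); lra).
  replace (2 * n + 2)%nat with (2 * m + (2 * (n - m) + 2))%nat by lia.
  rewrite pow_add, Rinv_mult.
  assert (0 < N ^ (2 * m)) by (apply pow_lt; lra).
  replace (/ N ^ (2 * m) * / N ^ (2 * (n - m) + 2) * N ^ (2 * m))
    with (/ N ^ (2 * (n - m) + 2)) by (field; split; apply pow_nonzero; lra).
  apply Rinv_le_contravar; [apply pow_lt; lra | apply Rle_pow; [lra | lia]].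
Qed.

Definition deriv_of_const (k : nat) (a : R) : R := match k with O => a | _ => 0 end.

Definition cell_coord (i : Z) (y : R) : R := (y - grid i) / (grid (i + 1) - grid i).

Lemma cell_coord_range i y : grid i <= y <= grid (i + 1) -> 0 <= cell_coord i y <= 1.
Proof.
  intro Hy. pose proof (grid_lt_succ i). unfold cell_coord.
  split; [apply Rmult_le_pos; [lra | apply Rlt_le, Rinv_0_lt_compat; lra]|].
  apply (Rmult_le_reg_r (grid (i + 1) - grid i)); [lra|].
  unfold Rdiv; rewrite Rmult_assoc, Rinv_l by lra; lra.
Qed.

Lemma cell_coord_lt i x y : x < y -> cell_coord i x < cell_coord i y.
Proof.
  intro Hxy. pose proof (grid_lt_succ i). unfold cell_coord.
  apply Rmult_lt_compat_r; [apply Rinv_0_lt_compat|]; lra.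
Qed.

Lemma cell_coord_at_succ i : cell_coord i (grid (i + 1)) = 1.
Proof. pose proof (grid_lt_succ i). unfold cell_coord; field; lra. Qed.

Lemma derivable_pt_lim_cell_coord i y :
  derivable_pt_lim (cell_coord i) y (/ (grid (i + 1) - grid i)).
Proof.
  set (c := / (grid (i + 1) - grid i)).
  assert (D1 : derivable_pt_lim (fun y => y - grid i) y 1).
  { replace 1 with (1 - 0) by ring.
    apply (derivable_pt_lim_minus id (fun _ => grid i));
      [apply derivable_pt_lim_id | apply derivable_pt_lim_const]. }
  pose proof (derivable_pt_lim_mult _ (fun _ => c) y _ _ D1 (derivable_pt_lim_const c y)) as D.
  unfold mult_fct in D. replace (1 * c + (y - grid i) * 0) with c in D by ring.
  exact D.
Qed.

Section Reparametrization.

Variable b : R.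

Lemma gap_window n : b - gap n < b - gap (Datatypes.S n).
Proof. pose proof (gap_succ_lt n); lra. Qed.

Definition approx (n : nat) : R :=
  Q2R (proj1_sig (constructive_indefinite_description _ (Q2R_dense _ _ (gap_window n)))).

Lemma approx_spec n : b - gap n < approx n < b - gap (Datatypes.S n).
Proof. unfold approx; destruct (constructive_indefinite_description _ _) as [q Hq]; exact Hq. Qed.

Lemma approx_lt_succ n : approx n < approx (Datatypes.S n).
Proof.
  pose proof (approx_spec n); pose proof (approx_spec (Datatypes.S n)).
  pose proof (gap_succ_lt (Datatypes.S n)); lra.
Qed.

Lemma approx_lt n : approx n < b.
Proof. pose proof (approx_spec n); pose proof (gap_gt0 (Datatypes.S n)); lra. Qed.

Definition level (i : Z) : R :=
  if Z.leb 0 i then approx (Z.to_nat i) else approx 0 + IZR i.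

Lemma level_of_nat n : level (Z.of_nat n) = approx n.
Proof. unfold level; destruct (Z.leb_spec 0 (Z.of_nat n)); [rewrite Nat2Z.id; reflexivity | lia]. Qed.

Lemma level_of_nonpos i : (i <= 0)%Z -> level i = approx 0 + IZR i.
Proof.
  intro; unfold level; destruct (Z.leb_spec 0 i); [|reflexivity].
  replace i with 0%Z by lia; simpl; ring.
Qed.

Lemma level_lt_succ i : level i < level (i + 1).
Proof.
  destruct (Z.le_gt_cases 0 i) as [Hi|Hi].
  - replace i with (Z.of_nat (Z.to_nat i)) by lia.
    replace (Z.of_nat (Z.to_nat i) + 1)%Z with (Z.of_nat (Datatypes.S (Z.to_nat i))) by lia.
    rewrite !level_of_nat; apply approx_lt_succ.
  - rewrite !level_of_nonpos, plus_IZR by lia; simpl; lra.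
Qed.

Lemma level_le i j : (i <= j)%Z -> level i <= level j.
Proof.
  intro Hij. replace j with (i + Z.of_nat (Z.to_nat (j - i)))%Z by lia.
  induction (Z.to_nat (j - i)) as [|n IH]; [rewrite Z.add_0_r; lra|].
  rewrite Nat2Z.inj_succ, <- Z.add_1_r, Z.add_assoc.
  pose proof (level_lt_succ (i + Z.of_nat n)); lra.
Qed.

Lemma level_lt i : level i < b.
Proof.
  unfold level; destruct (Z.leb_spec 0 i) as [|Hi]; [apply approx_lt|].
  apply IZR_lt in Hi; pose proof (approx_lt 0); simpl in Hi; lra.
Qed.

Lemma level_rational i : exists q, level i = Q2R q.
Proof.
  unfold level. destruct (Z.leb_spec 0 i).
  - eexists; reflexivity.
  - exists (proj1_sig (constructive_indefinite_description _ (Q2R_dense _ _ (gap_window 0)))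
            + inject_Z i)%Q.
    rewrite Q2R_plus, Q2R_inject_Z; reflexivity.
Qed.

Lemma level_step_lt_gap n :
  b - level (Z.of_nat n) < gap n /\ level (Z.of_nat n + 1) - level (Z.of_nat n) < gap n.
Proof.
  replace (Z.of_nat n + 1)%Z with (Z.of_nat (Datatypes.S n)) by lia.
  rewrite !level_of_nat. pose proof (approx_spec n); pose proof (approx_lt (Datatypes.S n)).
  split; lra.
Qed.

(** * The reparametrization *)

(* The k-th derivative of s_AB for A = (grid i, level i) and B = (grid (i+1), level (i+1)). *)
Definition piece_deriv (i : Z) (k : nat) (y : R) : R :=
  deriv_of_const k (level i) +
  (level (i + 1) - level i) / (grid (i + 1) - grid i) ^ k * s_deriv k (cell_coord i y).

Lemma piece_deriv_0 i y :
  piece_deriv i 0 y = level i + (level (i + 1) - level i) * s (cell_coord i y).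
Proof. unfold piece_deriv; simpl; rewrite s_deriv_0; field. Qed.

Lemma derivable_pt_lim_piece_deriv i k y :
  derivable_pt_lim (piece_deriv i k) y (piece_deriv i (Datatypes.S k) y).
Proof.
  unfold piece_deriv. set (dA := grid (i + 1) - grid i). set (dV := level (i + 1) - level i).
  assert (HdA : dA <> 0) by (unfold dA; pose proof (grid_lt_succ i); lra).
  pose proof (derivable_pt_lim_comp _ (s_deriv k) y _ _
                (derivable_pt_lim_cell_coord i y) (derivable_pt_lim_s_deriv k _)) as D1.
  pose proof (derivable_pt_lim_mult (fun _ => dV / dA ^ k) _ _ _ _
                (derivable_pt_lim_const (dV / dA ^ k) y) D1) as D2.
  pose proof (derivable_pt_lim_plus (fun _ => deriv_of_const k (level i)) _ _ _ _
                (derivable_pt_lim_const (deriv_of_const k (level i)) y) D2) as D.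
  unfold mult_fct, plus_fct, comp in D. fold dA in D.
  match goal with |- derivable_pt_lim _ _ ?l => replace l with
    (0 + (0 * s_deriv k (cell_coord i y) +
          dV / dA ^ k * (s_deriv (Datatypes.S k) (cell_coord i y) * / dA))) end.
  - exact D.
  - simpl; field; split; [apply pow_nonzero|]; assumption.
Qed.

Lemma piece_deriv_at_succ i k : piece_deriv (i + 1) k (grid (i + 1)) = piece_deriv i k (grid (i + 1)).
Proof.
  unfold piece_deriv. rewrite cell_coord_at_succ.
  replace (cell_coord (i + 1) (grid (i + 1))) with 0 by (unfold cell_coord; field;
    pose proof (grid_lt_succ (i + 1)); lra).
  destruct k as [|k]; simpl deriv_of_const.
  - rewrite s_deriv_0, s_le0, s_ge1 by lra. field; pose proof (grid_lt_succ i); lra.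
  - rewrite s_deriv_le0, s_deriv_ge1 by lra. ring.
Qed.

Definition left_deriv (k : nat) (y : R) : R :=
  if Rlt_dec y 0 then piece_deriv (grid_index y) k y else deriv_of_const k b.

Lemma left_deriv_on_cell i k y : grid i <= y <= grid (i + 1) -> left_deriv k y = piece_deriv i k y.
Proof.
  intro Hy. pose proof (grid_lt0 (i + 1)). unfold left_deriv.
  destruct (Rlt_dec y 0) as [_|]; [|lra].
  destruct (Req_dec y (grid (i + 1))) as [E|E].
  - rewrite (grid_index_unique (i + 1) y) by (pose proof (grid_lt_succ (i + 1)); lra).
    subst y; apply piece_deriv_at_succ.
  - rewrite (grid_index_unique i y) by lra; reflexivity.
Qed.

Lemma derivable_pt_lim_left_deriv_neg k y :
  y < 0 -> derivable_pt_lim (left_deriv k) y (left_deriv (Datatypes.S k) y).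
Proof.
  intro Hy. destruct (grid_index_spec y Hy) as [H1 H2]. set (i := grid_index y) in *.
  rewrite (left_deriv_on_cell i (Datatypes.S k) y) by lra.
  destruct (Req_dec y (grid i)) as [E|E].
  - pose proof (grid_lt_succ (i - 1)) as Hp. replace (i - 1 + 1)%Z with i in Hp by lia.
    apply (derivable_pt_lim_glue _ (piece_deriv (i - 1) k) (piece_deriv i k)
             (grid (i - 1)) y (grid (i + 1))); try lra.
    + intros x Hx; apply left_deriv_on_cell. replace (i - 1 + 1)%Z with i by lia; lra.
    + intros x Hx; apply left_deriv_on_cell; lra.
    + pose proof (piece_deriv_at_succ (i - 1) (Datatypes.S k)) as Hg.
      replace (i - 1 + 1)%Z with i in Hg by lia. rewrite E, Hg, <- E.
      apply derivable_pt_lim_piece_deriv.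
    + apply derivable_pt_lim_piece_deriv.
  - apply (derivable_pt_lim_local _ (piece_deriv i k) (grid i) y (grid (i + 1))); try lra.
    + intros x Hx; apply left_deriv_on_cell; lra.
    + apply derivable_pt_lim_piece_deriv.
Qed.

Lemma derivable_pt_lim_left_deriv_pos k y :
  0 < y -> derivable_pt_lim (left_deriv k) y (left_deriv (Datatypes.S k) y).
Proof.
  intro Hy. apply (derivable_pt_lim_local _ (fun _ => deriv_of_const k b) (y / 2) y (y + 1)); try lra.
  - intros x Hx; unfold left_deriv; destruct (Rlt_dec x 0); [lra | reflexivity].
  - unfold left_deriv; destruct (Rlt_dec y 0); [lra|]. apply derivable_pt_lim_const.
Qed.

(* On cell n the level step is below [gap n] while the k-th derivative divides it by
   width^k <= (n+2)^(2k); the choice of [gap] makes the product O(y^2) once n >= k. *)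
Lemma piece_deriv_near_b k : exists M, 0 <= M /\ forall n y, (k <= n)%nat ->
  grid (Z.of_nat n) <= y <= grid (Z.of_nat n + 1) ->
  Rabs (piece_deriv (Z.of_nat n) k y - deriv_of_const k b) <= M * y ^ 2.
Proof.
  destruct (s_deriv_bounded k) as [Mk HMk].
  exists (Rmax 1 Mk); split; [pose proof (Rmax_l 1 Mk); lra|].
  intros n y Hkn Hy. pose proof (Rmax_l 1 Mk); pose proof (Rmax_r 1 Mk).
  set (N := INR n + 2). set (i := Z.of_nat n) in *.
  set (dA := grid (i + 1) - grid i). set (dV := level (i + 1) - level i).
  assert (HN : 0 < / N ^ 2) by (apply Rinv_0_lt_compat, pow_lt; unfold N; pose proof (pos_INR n); lra).
  pose proof (grid_step_ge n) as HdA. fold N i dA in HdA.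
  pose proof (sqr_ge_on_cell n y Hy) as Hy2. fold N in Hy2.
  destruct (level_step_lt_gap n) as [Hb HdV]. fold i dV in Hb, HdV.
  assert (HdV0 : 0 < dV) by (unfold dV; apply Rlt_0_minus, level_lt_succ).
  pose proof (cell_coord_range i y Hy) as Hu.
  unfold piece_deriv; fold dA dV.
  destruct k as [|k]; simpl deriv_of_const.
  - pose proof (gap_scaled_le n 0 Hkn) as Hg. fold N in Hg.
    rewrite Nat.mul_0_r, pow_O, Rmult_1_r in Hg.
    rewrite s_deriv_0, pow_O, Rdiv_1_r. pose proof (s_range (cell_coord i y)).
    pose proof (level_lt (i + 1)). pose proof (pow2_ge_0 y).
    assert (0 <= dV * s (cell_coord i y) <= dV) by (split; nra).
    rewrite Rabs_left1 by (unfold dV in *; lra). nra.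
  - rewrite Rplus_0_l, Rminus_0_r.
    pose proof (gap_scaled_le n (Datatypes.S k) Hkn) as Hg. fold N in Hg.
    assert (HdAk : / dA ^ Datatypes.S k <= N ^ (2 * Datatypes.S k)).
    { rewrite pow_mult, <- (Rinv_inv (N ^ 2)), pow_inv.
      apply Rinv_le_contravar; [apply pow_lt; lra | apply pow_incr; lra]. }
    assert (0 < / dA ^ Datatypes.S k) by (apply Rinv_0_lt_compat, pow_lt; lra).
    specialize (HMk _ Hu). pose proof (gap_gt0 n).
    unfold Rdiv. rewrite !Rabs_mult, (Rabs_right dV), (Rabs_right (/ _)) by lra.
    apply Rle_trans with (gap n * N ^ (2 * Datatypes.S k) * Mk).
    + apply Rmult_le_compat; [nra | apply Rabs_pos | apply Rmult_le_compat; lra | exact HMk].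
    + assert (0 <= Mk) by (pose proof (Rabs_pos (s_deriv (Datatypes.S k) (cell_coord i y))); lra).
      apply Rle_trans with (/ N ^ 2 * Mk); [apply Rmult_le_compat_r; lra | nra].
Qed.

Lemma derivable_pt_lim_left_deriv_0 k : derivable_pt_lim (left_deriv k) 0 (left_deriv (Datatypes.S k) 0).
Proof.
  destruct (piece_deriv_near_b k) as [M [HM Hest]].
  unfold left_deriv at 2; destruct (Rlt_dec 0 0) as [|_]; [lra|]. simpl deriv_of_const.
  assert (Hd : 0 < / (INR k + 2)) by (apply Rinv_0_lt_compat; pose proof (pos_INR k); lra).
  apply (derivable_pt_lim_0_of_quadratic_bound _ 0 _ M Hd).
  intros x Hx. rewrite Rminus_0_r in Hx |- *. unfold Rsqr.
  unfold left_deriv at 2; destruct (Rlt_dec 0 0) as [|_]; [lra|].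
  destruct (Rlt_dec x 0) as [Hneg|Hnonneg].
  - rewrite Rabs_left in Hx by lra.
    destruct (grid_index_spec x Hneg) as [H1 H2].
    assert (Hk : (Z.of_nat k <= grid_index x)%Z).
    { destruct (Z.le_gt_cases (Z.of_nat k) (grid_index x)) as [|Hlt]; [assumption|].
      pose proof (grid_le (grid_index x + 1) (Z.of_nat (Datatypes.S k)) ltac:(lia)) as Hg.
      rewrite grid_of_nat, S_INR in Hg.
      replace (INR k + 1 + 1) with (INR k + 2) in Hg by ring. lra. }
    replace (grid_index x) with (Z.of_nat (Z.to_nat (grid_index x))) in * by lia.
    rewrite (left_deriv_on_cell (Z.of_nat (Z.to_nat (grid_index x)))) by lra.
    replace (x * x) with (x ^ 2) by ring.
    apply Hest; lia || lra.
  - unfold left_deriv; destruct (Rlt_dec x 0); [lra|].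
    rewrite Rminus_diag, Rabs_R0. apply Rmult_le_pos; [assumption | apply Rle_0_sqr].
Qed.

Lemma derivable_pt_lim_left_deriv k y : derivable_pt_lim (left_deriv k) y (left_deriv (Datatypes.S k) y).
Proof.
  destruct (Rtotal_order y 0) as [H | [H | H]].
  - apply derivable_pt_lim_left_deriv_neg; assumption.
  - subst y; apply derivable_pt_lim_left_deriv_0.
  - apply derivable_pt_lim_left_deriv_pos; assumption.
Qed.

Definition right_deriv (k : nat) (y : R) : R := y * h_deriv k y + INR k * h_deriv (pred k) y.

Lemma derivable_pt_lim_right_deriv k y :
  derivable_pt_lim (right_deriv k) y (right_deriv (Datatypes.S k) y).
Proof.
  unfold right_deriv.
  pose proof (derivable_pt_lim_mult id (h_deriv k) y _ _
                (derivable_pt_lim_id y) (derivable_pt_lim_h_deriv k y)) as D1.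
  pose proof (derivable_pt_lim_mult (fun _ => INR k) (h_deriv (pred k)) y _ _
                (derivable_pt_lim_const (INR k) y) (derivable_pt_lim_h_deriv (pred k) y)) as D2.
  pose proof (derivable_pt_lim_plus _ _ _ _ _ D1 D2) as D. unfold plus_fct, mult_fct, id in D.
  match goal with |- derivable_pt_lim _ _ ?l => replace l with
    (1 * h_deriv k y + y * h_deriv (Datatypes.S k) y +
     (0 * h_deriv (pred k) y + INR k * h_deriv (Datatypes.S (pred k)) y)) end.
  - exact D.
  - destruct k as [|k]; [simpl; ring|]. simpl pred. rewrite (S_INR (Datatypes.S k)). ring.
Qed.

Definition reparam_deriv (k : nat) (y : R) : R := left_deriv k y + right_deriv k y.

Definition reparam : R -> R := reparam_deriv 0.

Lemma reparam_at_0 : reparam 0 = b.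
Proof. unfold reparam, reparam_deriv, left_deriv, right_deriv; destruct (Rlt_dec 0 0); [lra|]; simpl; ring. Qed.

Lemma reparam_nonneg y : 0 <= y -> reparam y = b + y * h y.
Proof.
  intro Hy. unfold reparam, reparam_deriv, left_deriv, right_deriv.
  destruct (Rlt_dec y 0); [lra|]. rewrite h_deriv_0; simpl; ring.
Qed.

Lemma reparam_on_cell i y : grid i <= y < grid (i + 1) ->
  reparam y = level i + (level (i + 1) - level i) * s (cell_coord i y).
Proof.
  intro Hy. pose proof (grid_lt0 (i + 1)).
  unfold reparam, reparam_deriv, right_deriv.
  rewrite (left_deriv_on_cell i 0 y), piece_deriv_0 by lra.
  rewrite h_deriv_0, h_le0 by lra; simpl; ring.
Qed.

Lemma reparam_bounds_on_cell i y : grid i <= y < grid (i + 1) ->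
  level i <= reparam y < level (i + 1).
Proof.
  intro Hy. rewrite (reparam_on_cell i y Hy).
  pose proof (cell_coord_range i y ltac:(lra)) as Hu.
  assert (Hs1 : s (cell_coord i y) < 1).
  { rewrite <- (s_ge1 1) by lra. apply s_lt; [lra | | lra].
    rewrite <- (cell_coord_at_succ i). apply cell_coord_lt; lra. }
  pose proof (s_range (cell_coord i y)). pose proof (level_lt_succ i). split; nra.
Qed.

Lemma reparam_lt_on_neg x y : x < y < 0 -> reparam x < reparam y.
Proof.
  intro Hxy.
  destruct (grid_index_spec x ltac:(lra)) as [Hx1 Hx2]. set (i := grid_index x) in *.
  destruct (grid_index_spec y ltac:(lra)) as [Hy1 Hy2]. set (j := grid_index y) in *.
  pose proof (reparam_bounds_on_cell i x ltac:(lra)).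
  pose proof (reparam_bounds_on_cell j y ltac:(lra)).
  destruct (Z.lt_trichotomy i j) as [Hij | [Hij | Hij]].
  - pose proof (level_le (i + 1) j ltac:(lia)); lra.
  - rewrite <- Hij in Hy1, Hy2.
    rewrite !(reparam_on_cell i) by lra.
    pose proof (level_lt_succ i).
    assert (s (cell_coord i x) < s (cell_coord i y)).
    { pose proof (cell_coord_range i x ltac:(lra)); pose proof (cell_coord_range i y ltac:(lra)).
      apply s_lt; [lra | apply cell_coord_lt; lra | lra]. }
    nra.
  - pose proof (grid_le (j + 1) i ltac:(lia)); lra.
Qed.

Lemma reparam_lt_b y : y < 0 -> reparam y < b.
Proof.
  intro Hy. destruct (grid_index_spec y Hy) as [H1 H2].
  pose proof (reparam_bounds_on_cell _ y (conj H1 H2)).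
  pose proof (level_lt (grid_index y + 1)); lra.
Qed.

Lemma reparam_strict x y : x < y -> reparam x < reparam y.
Proof.
  intro Hxy.
  assert (Hpos : forall z, 0 < z -> b < reparam z).
  { intros z Hz. rewrite reparam_nonneg by lra. pose proof (h_gt0 z Hz). nra. }
  destruct (Rlt_dec y 0) as [Hy|Hy]; [apply reparam_lt_on_neg; lra|].
  destruct (Rlt_dec x 0) as [Hx|Hx].
  - pose proof (reparam_lt_b x Hx).
    destruct (Req_dec y 0) as [->|]; [rewrite reparam_at_0; lra|].
    pose proof (Hpos y ltac:(lra)); lra.
  - rewrite !reparam_nonneg by lra.
    destruct (Req_dec x 0) as [->|]; [pose proof (h_gt0 y ltac:(lra)); nra|].
    pose proof (h_lt x y ltac:(lra) Hxy); pose proof (h_gt0 x ltac:(lra)). nra.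
Qed.

Lemma derivable_pt_lim_reparam_deriv k y :
  derivable_pt_lim (reparam_deriv k) y (reparam_deriv (Datatypes.S k) y).
Proof.
  apply (derivable_pt_lim_plus (left_deriv k) (right_deriv k));
    [apply derivable_pt_lim_left_deriv | apply derivable_pt_lim_right_deriv].
Qed.

Lemma reparam_below y : y < -1 -> reparam y < approx 0 + y + 2.
Proof.
  intro Hy. destruct (grid_index_spec y ltac:(lra)) as [H1 H2]. set (i := grid_index y) in *.
  assert (Hi : (i <= -1)%Z).
  { destruct (Z.le_gt_cases i (-1)) as [|Hlt]; [assumption|].
    pose proof (grid_le 0 i ltac:(lia)) as Hg. rewrite grid_of_nonneg in Hg by lia.
    simpl in Hg. replace (- / (0 + 1)) with (-1) in Hg by field. lra. }
  pose proof (reparam_bounds_on_cell i y (conj H1 H2)) as [_ Hb].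
  rewrite level_of_nonpos, plus_IZR in Hb by lia. rewrite grid_of_nonpos in H1 by lia.
  simpl in Hb. lra.
Qed.

Lemma reparam_above y : 1 <= y -> b + y - 1 <= reparam y.
Proof.
  intro Hy. rewrite reparam_nonneg by lra. unfold h. destruct (Rle_dec y 0); [lra|].
  pose proof (exp_ineq1_le (- / y)).
  assert (y * (1 + - / y) = y - 1) by (field; lra). nra.
Qed.

Lemma reparam_surjective z : exists y, reparam y = z.
Proof.
  set (y1 := Rmin (-2) (z - approx 0 - 3)). set (y2 := Rmax 1 (z - b + 2)).
  pose proof (Rmin_l (-2) (z - approx 0 - 3)); pose proof (Rmin_r (-2) (z - approx 0 - 3)).
  pose proof (Rmax_l 1 (z - b + 2)); pose proof (Rmax_r 1 (z - b + 2)).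
  pose proof (reparam_below y1 ltac:(unfold y1; lra)).
  pose proof (reparam_above y2 ltac:(unfold y2; lra)).
  destruct (IVT (fun y => reparam y - z) y1 y2) as [y [_ Hy]].
  - apply continuity_minus; [|apply continuity_const; intros ? ?; reflexivity].
    intro y. apply derivable_continuous_pt. exists (reparam_deriv 1 y).
    apply derivable_pt_lim_reparam_deriv.
  - unfold y1, y2 in *; lra.
  - unfold y1 in *; lra.
  - unfold y2 in *; lra.
  - exists y; lra.
Qed.

Lemma reparam_T3 : T3 reparam.
Proof.
  split; [|split; [|split]].
  - exists reparam_deriv; split; [reflexivity | apply derivable_pt_lim_reparam_deriv].
  - exact reparam_strict.
  - intros x y E. destruct (Rtotal_order x y) as [L | [L | L]]; [| assumption |];
      [pose proof (reparam_strict x y L) | pose proof (reparam_strict y x L)]; lra.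
  - exact reparam_surjective.
Qed.

Lemma reparam_simF y : y < 0 -> simF y (reparam y).
Proof.
  intro Hy. left. destruct (grid_index_spec y Hy) as [H1 H2]. set (i := grid_index y) in *.
  destruct (grid_rational i) as [p1 E1], (grid_rational (i + 1)) as [p2 E2].
  destruct (level_rational i) as [q1 F1], (level_rational (i + 1)) as [q2 F2].
  exists p1, q1, p2, q2. rewrite <- E1, <- E2, <- F1, <- F2.
  pose proof (grid_lt_succ i); pose proof (level_lt_succ i).
  repeat split; try lra.
  rewrite (reparam_on_cell i y) by lra. unfold sAB, cell_coord; ring.
Qed.

End Reparametrization.

Lemma fcls_eq_of_simF x y : simF x y -> fcls x = fcls y.
Proof.
  intro Hxy.
  assert (Hyx : simF y x) by (destruct Hxy; [right | left]; assumption).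
  assert (E : simF_star x = simF_star y).
  { apply functional_extensionality; intro a; apply propositional_extensionality; split; intro Ha.
    - apply rt_trans with x; [apply rt_step |]; assumption.
    - apply rt_trans with y; [apply rt_step |]; assumption. }
  unfold fcls. generalize (ex_intro (fun z => simF_star x = simF_star z) x eq_refl).
  rewrite E. intro e. f_equal. apply proof_irrelevance.
Qed.

Theorem mainTheorem9 :
  forall P : (R -> S) -> (R -> S),
    is_predictor P -> T3_anonymous P ->
    forall w z : R, P fcls w = P fcls z.
Proof.
  intros P Hpred Hanon.
  assert (Hb : forall b, P fcls b = P fcls 0).
  { intro b.
    pose proof (f_equal (fun F => F 0) (Hanon fcls (reparam b) (reparam_T3 b))) as E.
    simpl in E. rewrite reparam_at_0 in E. rewrite <- E.
    apply Hpred. intros y Hy. symmetry. apply fcls_eq_of_simF, reparam_simF; assumption. }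
  intros w z. rewrite (Hb w), (Hb z). reflexivity.
Qed.
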